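(* Let $i,j\geq 0$ and $R=(\gamma_{\mathrm{low}},\gamma_{\mathrm{mid}},\gamma_{\mathrm{up}})\in\mathcal{R}_{i,j}$, and let $\tau(R):=(\mathrm{mir}(\gamma_{\mathrm{up}}),\mathrm{mir}(\gamma_{\mathrm{mid}}),\mathrm{mir}(\gamma_{\mathrm{low}}))$, where $\mathrm{mir}(c_1\cdots c_n):=c_n\cdots c_1$ is the mirror word. Then $\tau(R)\in\mathcal{G}_{i,j}$ if and only if $R\in\mathcal{G}_{i,j}$.
   Context: A walk is a finite word on $\{N,E\}$, viewed as a lattice path from $(0,0)$ with steps $N=(0,1)$, $E=(1,0)$. For walks $\gamma,\gamma'$, $\gamma'$ is above $\gamma$ if they have the same endpoint and no East step of $\gamma$ lies strictly above the East step of $\gamma'$ in the same vertical column. For $\nu$ ending at $(i,j)$, $\mathcal{W}_\nu$ is the set of walks above $\nu$. For $\gamma\in\mathcal{W}_\nu$ and a point $p=(x,y)$ on $\gamma$, let $x'$ be the abscissa of the North step of $\nu$ from ordinate $y$ to $y+1$ ($x'=i$ if $y=j$) and $\ell(p)=x'-x$. If $p$ is preceded by $E$ and followed by $N$ in $\gamma$, let $p'$ be the next point after $p$ on $\gamma$ with $\ell(p')=\ell(p)$, and let $\mathrm{push}_p(\gamma)$ be obtained by moving the $E$ step preceding $p$ to just after $p'$. $\mathrm{Tam}(\nu)$ is the order on $\mathcal{W}_\nu$ given by the reflexive-transitive closure of $\gamma\leq\mathrm{push}_p(\gamma)$. $\mathcal{G}_{i,j}$ is the set of triples $(\nu,\gamma,\gamma')$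 with $\nu$ ending at $(i,j)$, $\gamma,\gamma'\in\mathcal{W}_\nu$ and $\gamma\leq\gamma'$ in $\mathrm{Tam}(\nu)$. $\mathcal{R}_{i,j}$ is the set of triples $(\nu,\gamma,\gamma')$ of walks all ending at $(i,j)$ with $\gamma'$ above $\gamma$ and $\gamma$ above $\nu$. *)

From HB Require Import structures.
From mathcomp Require Import all_boot all_order all_algebra.
From Stdlib Require Import Relation_Operators.
Set Implicit Arguments. Unset Strict Implicit. Unset Printing Implicit Defensive.
Import GRing.Theory Num.Theory.

(* Steps: N = (0,1), E = (1,0). *)
Inductive step := N | E.

Definition step_eqb (a b : step) : bool :=
  match a, b with N, N | E, E => true | _, _ => false end.
Lemma step_eqP : Equality.axiom step_eqb.
Proof. by case; case; constructor. Qed.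
HB.instance Definition _ := hasDecEq.Build step step_eqP.

Definition walk := seq step.

Definition endpoint (w : walk) : nat * nat := (count_mem E w, count_mem N w).

(* heights of the East steps in order: the East step in column x
   (from abscissa x to x+1) is at ordinate  nth 0 (eheights w) x. *)
Fixpoint eheights_aux (h : nat) (w : walk) : seq nat :=
  match w with
  | [::] => [::]
  | N :: w' => eheights_aux h.+1 w'
  | E :: w' => h :: eheights_aux h w'
  end.
Definition eheights (w : walk) := eheights_aux 0 w.

(* abscissae of the North steps in order: the North step from ordinate y to
   y+1 is at abscissa  nth 0 (nabscissae w) y. *)
Fixpoint nabscissae_aux (x : nat) (w : walk) : seq nat :=
  match w with
  | [::] => [::]
  | E :: w' => nabscissae_aux x.+1 w'
  | N :: w' => x :: nabscissae_aux x w'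
  end.
Definition nabscissae (w : walk) := nabscissae_aux 0 w.

Definition above (g' g : walk) : Prop :=
  endpoint g' = endpoint g /\
  forall x, x < size (eheights g) ->
    ~ (nth 0 (eheights g') x < nth 0 (eheights g) x).

Definition inW (nu g : walk) : Prop := above g nu.

Definition point (g : walk) (k : nat) : nat * nat := endpoint (take k g).

(* x'(y): abscissa of the North step of nu from ordinate y to y+1,
   and x' = i (the abscissa of the endpoint) if y = j. *)
Definition xprime (nu : walk) (y : nat) : nat :=
  nth (endpoint nu).1 (nabscissae nu) y.

Definition ell (nu g : walk) (k : nat) : int :=
  ((xprime nu (point g k).2)%:Z - ((point g k).1)%:Z)%R.

(* push_p(g) = g' where p is the point after k steps of g, p is preceded by E
   and followed by N, p' is the point after k' steps (the next point after p
   with ell(p') = ell(p)), and the E step preceding p is moved just after p'. *)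
Definition push_step (nu g g' : walk) : Prop :=
  exists k k',
    [/\ 0 < k, k < k' & k' <= size g] /\
    [/\ nth N g k.-1 = E & nth N g k = N] /\
    ell nu g k' = ell nu g k /\
    (forall m, k < m -> m < k' -> ell nu g m <> ell nu g k) /\
    g' = take k.-1 g ++ drop k (take k' g) ++ E :: drop k' g.

Definition tam_le (nu : walk) : walk -> walk -> Prop :=
  clos_refl_trans walk (fun a b => [/\ inW nu a, inW nu b & push_step nu a b]).

Definition inG (i j : nat) (nu g g' : walk) : Prop :=
  [/\ endpoint nu = (i, j), inW nu g, inW nu g' & tam_le nu g g'].

Definition inR (i j : nat) (nu g g' : walk) : Prop :=
  [/\ endpoint nu = (i, j), endpoint g = (i, j), endpoint g' = (i, j),
      above g' g & above g nu].

Definition mir (w : walk) : walk := rev w.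

(* For walks nu <= g <= g' (each above the previous one), record row by row
   the gaps a = x_nu - x_g and b = x_g - x_g', where x_w(r) is the abscissa of
   the North step of w at height r.  Then g <= g' in Tam(nu) iff the pair
   (a, b) has no failure: no rows s < r with a s < a t and
   a r + b r < a t + b s for all s < t <= r.  A push moves one unit from b to
   a on a window of rows on which a stays above its value at the bottom row;
   such a shift never turns a failure into a non-failure, and when g <> g'
   and (a, b) has no failure, some push toward g' keeps it failure-free while
   decreasing the sum of the x_g.  Mirroring the three walks turns (a, b) into
   (b, a) read backwards, and a minimal failure window is also a failure of
   that reversed pair, so the criterion is invariant under mirroring. *)

From mathcomp Require Import all_boot all_order all_algebra zify.
From Stdlib Require Import Classical Relation_Operators Operators_Properties.
Import Order.TTheory GRing.Theory Num.Theory.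

Set Implicit Arguments.
Unset Strict Implicit.

(** * Walks and the abscissae of their North steps *)

Definition cE (w : walk) : nat := count_mem E w.
Definition cN (w : walk) : nat := count_mem N w.
Arguments cE : simpl never.
Arguments cN : simpl never.

Lemma cE_nil : cE [::] = 0. Proof. by []. Qed.
Lemma cN_nil : cN [::] = 0. Proof. by []. Qed.
Lemma cE_E w : cE (E :: w) = (cE w).+1. Proof. by []. Qed.
Lemma cE_N w : cE (N :: w) = cE w. Proof. by []. Qed.
Lemma cN_E w : cN (E :: w) = cN w. Proof. by []. Qed.
Lemma cN_N w : cN (N :: w) = (cN w).+1. Proof. by []. Qed.
Lemma cE_cat w1 w2 : cE (w1 ++ w2) = cE w1 + cE w2. Proof. exact: count_cat. Qed.
Lemma cN_cat w1 w2 : cN (w1 ++ w2) = cN w1 + cN w2. Proof. exact: count_cat. Qed.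
Lemma cE_rev w : cE (rev w) = cE w. Proof. exact: count_rev. Qed.
Lemma cN_rev w : cN (rev w) = cN w. Proof. exact: count_rev. Qed.
Lemma endpointE w : endpoint w = (cE w, cN w). Proof. by []. Qed.

Definition countsE := (cE_nil, cN_nil, cE_E, cE_N, cN_E, cN_N).

Lemma nabscissae_cat x w1 w2 : nabscissae_aux x (w1 ++ w2) =
  nabscissae_aux x w1 ++ nabscissae_aux (x + cE w1) w2.
Proof.
elim: w1 x => [|c w1 IH] x /=; first by rewrite addn0.
by case: c => /=; rewrite IH //; congr (_ ++ _); congr nabscissae_aux; rewrite ?countsE; lia.
Qed.

Lemma size_eheights h w : size (eheights_aux h w) = cE w.
Proof. by elim: w h => [|[] w IH] h //=; rewrite IH. Qed.

Lemma size_nabscissae x w : size (nabscissae_aux x w) = cN w.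
Proof. by elim: w x => [|[] w IH] x //=; rewrite IH. Qed.

Lemma nabscissae_shift x w : nabscissae_aux x w = map (addn x) (nabscissae w).
Proof.
rewrite /nabscissae; elim: w x => [|[] w IH] x //=; first by rewrite IH addn0.
by rewrite IH [in RHS]IH -map_comp; apply: eq_map => y /=; lia.
Qed.

Lemma nabscissae_bounds x w r d : r < cN w ->
  x <= nth d (nabscissae_aux x w) r <= x + cE w.
Proof.
elim: w x r => [|[] w IH] x r //=; rewrite ?countsE.
  by case: r => [|r] H /=; [|have := IH x r H]; lia.
by move=> H; have := IH x.+1 r H; lia.
Qed.

Lemma nabscissae_ge x w r d : x <= d -> x <= nth d (nabscissae_aux x w) r.
Proof.
move=> xd; have [Hr|Hr] := ltnP r (cN w); first by have := nabscissae_bounds x d Hr; lia.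
by rewrite nth_default // size_nabscissae.
Qed.

Lemma eheights_bounds h w x d : x < cE w ->
  h <= nth d (eheights_aux h w) x <= h + cN w.
Proof.
elim: w h x => [|[] w IH] h x //=; rewrite ?countsE.
  by move=> H; have := IH h.+1 x H; lia.
by case: x => [|x] H /=; [|have := IH h x H]; lia.
Qed.

(* Abscissa of the North step of [w] from ordinate [r] to [r + 1], or of the
   endpoint when [r >= cN w]; [xprime nu] is [xN nu]. *)
Definition xN (w : walk) (r : nat) : nat := nth (cE w) (nabscissae w) r.

Lemma nabscissae_mono x w r1 r2 : r1 <= r2 ->
  nth (x + cE w) (nabscissae_aux x w) r1 <= nth (x + cE w) (nabscissae_aux x w) r2.
Proof.
elim: w x r1 r2 => [|[] w IH] x r1 r2 /=; rewrite ?countsE ?nth_nil //.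
  case: r1 r2 => [|r1] [|r2] //= r12; last exact: IH.
  have [Hr|Hr] := ltnP r2 (cN w); first by have := nabscissae_bounds x (x + cE w) Hr; lia.
  by rewrite nth_default ?size_nabscissae // leq_addr.
by rewrite -addSnnS; exact: IH.
Qed.

Lemma xN_mono w : {homo xN w : r1 r2 / r1 <= r2}.
Proof. exact: (nabscissae_mono 0). Qed.

Lemma xN_le w r : xN w r <= cE w.
Proof.
rewrite /xN /nabscissae; have [Hr|Hr] := ltnP r (cN w).
  by have := nabscissae_bounds 0 (cE w) Hr; lia.
by rewrite nth_default // size_nabscissae.
Qed.

Lemma xN_default w r : cN w <= r -> xN w r = cE w.
Proof. by move=> H; rewrite /xN /nabscissae nth_default // size_nabscissae. Qed.

Lemma xN_at w m : m < size w -> nth N w m = N -> xN w (cN (take m w)) = cE (take m w).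
Proof.
move=> Hm Hn; have Hw : w = take m w ++ N :: drop m.+1 w.
  by rewrite -Hn -drop_nth // cat_take_drop.
by rewrite /xN /nabscissae [in nabscissae_aux _ w]Hw nabscissae_cat nth_cat size_nabscissae ltnn subnn.
Qed.

Lemma xN_take_ge w m : cE (take m w) <= xN w (cN (take m w)).
Proof.
rewrite /xN /nabscissae -{2 3}(cat_take_drop m w) nabscissae_cat nth_cat.
by rewrite size_nabscissae ltnn subnn; apply: nabscissae_ge; rewrite cE_cat; lia.
Qed.

Lemma eheights_leq_nabscissae w h x x' r d1 d2 : x' < cE w -> r < cN w ->
  (nth d1 (eheights_aux h w) x' <= h + r) = (x + x' < nth d2 (nabscissae_aux x w) r).
Proof.
elim: w h x x' r => [|[] w IH] h x x' r /=; rewrite ?countsE // => Hx Hr.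
  case: r Hr => [|r] Hr /=; last by rewrite -(IH h.+1 x x' r) // addSnnS.
  by have := eheights_bounds h.+1 d1 Hx; rewrite addn0 => H; apply/idP/idP; lia.
case: x' Hx => [|x'] Hx /=; last by rewrite (IH h x.+1 x' r) // addSnnS.
by have := nabscissae_bounds x.+1 d2 Hr => H; apply/idP/idP; lia.
Qed.

Lemma eheights_leq_xN w x r : x < cE w -> r < cN w ->
  (nth 0 (eheights w) x <= r) = (x < xN w r).
Proof. by move=> Hx Hr; have := eheights_leq_nabscissae 0 0 0 (cE w) Hx Hr. Qed.

Lemma eheights_le w x : nth 0 (eheights w) x <= cN w.
Proof.
rewrite /eheights; have [Hx|Hx] := ltnP x (cE w); first by have := eheights_bounds 0 0 Hx; lia.
by rewrite nth_default // size_eheights.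
Qed.

Lemma aboveP g' g : above g' g <->
  [/\ cE g' = cE g, cN g' = cN g & forall r, xN g' r <= xN g r].
Proof.
rewrite /above !endpointE; split=> [[[E1 N1] H]|[E1 N1 H]].
  split=> // r; have [Hr|Hr] := ltnP r (cN g); last by rewrite !xN_default ?E1 ?N1.
  rewrite leqNgt; apply/negP => Hlt.
  have Hx : xN g r < cE g by have := xN_le g' r; lia.
  apply: (H (xN g r)); first by rewrite size_eheights.
  have := eheights_leq_xN Hx Hr; rewrite ltnn => /negbT; rewrite -ltnNge.
  by have := eheights_leq_xN (ltac:(lia) : xN g r < cE g') (ltac:(lia) : r < cN g'); lia.
split; first by rewrite E1 N1.
move=> x; rewrite size_eheights => Hx Hlt; set r := nth 0 (eheights g') x.
have Hr : r < cN g by have := eheights_le g x; lia.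
have E2 : x < xN g' r by rewrite -eheights_leq_xN ?E1 ?N1.
have := eheights_leq_xN Hx Hr; rewrite leqNgt Hlt => /esym/negbT; rewrite -leqNgt.
by have := H r; lia.
Qed.

Lemma nabscissae_inj x w1 w2 :
  nabscissae_aux x w1 = nabscissae_aux x w2 -> cE w1 = cE w2 -> w1 = w2.
Proof.
have head_ge x' w y s : nabscissae_aux x' w = y :: s -> x' <= y.
  by move=> H; have := nabscissae_ge w 0 (leqnn x'); rewrite H.
elim: w1 x w2 => [|c1 w1 IH] x [|c2 w2] //=; rewrite ?countsE.
- by case: c2.
- by case: c1.
case: c1; case: c2 => /=; rewrite ?countsE.
- by move=> [H] H2; rewrite (IH x w2).
- by move=> H; have := head_ge _ _ _ _ (esym H); lia.
- by move=> H; have := head_ge _ _ _ _ H; lia.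
- by move=> H [H2]; rewrite (IH x.+1 w2).
Qed.

Lemma eq_walk_xN w1 w2 : cE w1 = cE w2 -> cN w1 = cN w2 ->
  (forall r, r < cN w1 -> xN w1 r = xN w2 r) -> w1 = w2.
Proof.
move=> E12 N12 H; apply: (@nabscissae_inj 0) => //.
apply: (@eq_from_nth _ 0); first by rewrite !size_nabscissae.
move=> r; rewrite size_nabscissae => Hr; have := H r Hr; rewrite /xN /nabscissae.
by rewrite !(set_nth_default 0) ?size_nabscissae // -N12.
Qed.

Lemma nabscissae_rev w :
  nabscissae (rev w) = rev (map (fun x => cE w - x) (nabscissae w)).
Proof.
elim: w => [|c w IH] //; rewrite rev_cons -cats1 /nabscissae nabscissae_cat.
rewrite -/(nabscissae (rev w)) IH cE_rev; case: c => /=.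
- by rewrite cE_N subn0 add0n rev_cons -cats1.
- by rewrite cats0 cE_E nabscissae_shift -map_comp.
Qed.

Lemma xN_rev w r : r < cN w -> xN (rev w) r = cE w - xN w (cN w - r.+1).
Proof.
move=> Hr; rewrite /xN nabscissae_rev cE_rev.
rewrite (set_nth_default 0) ?size_rev ?size_map ?size_nabscissae //.
rewrite nth_rev ?size_map ?size_nabscissae // (nth_map 0) ?size_nabscissae; last lia.
by rewrite (set_nth_default 0 (cE w)) // size_nabscissae; lia.
Qed.

Lemma above_trans a b c : above a b -> above b c -> above a c.
Proof.
move=> /aboveP[Ea Na H1] /aboveP[Eb Nb H2]; apply/aboveP.
by split=> [||r]; [rewrite Ea | rewrite Na | exact: leq_trans (H1 r) (H2 r)].
Qed.

Lemma above_rev a b : above a b -> above (rev b) (rev a).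
Proof.
move=> /aboveP[Eab Nab H]; apply/aboveP; rewrite !cE_rev !cN_rev.
split=> // r; have [Hr|Hr] := ltnP r (cN a); last by rewrite !xN_default ?cN_rev -?Nab ?cE_rev ?Eab.
rewrite !xN_rev -?Nab // Eab; have := H (cN a - r.+1); have := xN_le b (cN a - r.+1); lia.
Qed.

Lemma cE_take_S (w : walk) m : m < size w ->
  cE (take m.+1 w) = cE (take m w) + (nth N w m == E).
Proof. by move=> Hm; rewrite (take_nth N Hm) -cats1 cE_cat; case: nth. Qed.

Lemma cN_take_S (w : walk) m : m < size w ->
  cN (take m.+1 w) = cN (take m w) + (nth N w m == N).
Proof. by move=> Hm; rewrite (take_nth N Hm) -cats1 cN_cat; case: nth. Qed.

Lemma cN_take_mono (w : walk) : {homo (fun m => cN (take m w)) : a b / a <= b}.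
Proof. by move=> a b ab; rewrite /= -(cat_take_drop a (take b w)) take_takel // cN_cat leq_addr. Qed.

Lemma cN_take_le (w : walk) m : cN (take m w) <= cN w.
Proof. by rewrite -{2}(cat_take_drop m w) cN_cat leq_addr. Qed.

Lemma exists_nth_N (w : walk) r : r < cN w ->
  exists m, [/\ m < size w, nth N w m = N & cN (take m w) = r].
Proof.
elim: w r => [|[] w IH] r; rewrite ?countsE // => Hr.
  case: r Hr => [|r] Hr; first by exists 0.
  by have [m [? ? Hm]] := IH r Hr; exists m.+1; rewrite /= cN_N Hm.
by have [m [? ? Hm]] := IH r Hr; exists m.+1; rewrite /= cN_E Hm.
Qed.

Lemma exists_nth_N_between (w : walk) a b r : a <= b <= size w ->
  cN (take a w) <= r < cN (take b w) ->
  exists m, [/\ a <= m < b, nth N w m = N & cN (take m w) = r].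
Proof.
elim: b => [|b IH] /andP[ab bw] /andP[ar rb]; first by move: ab ar rb; rewrite leqn0 => /eqP->; lia.
have [ab1|ba] := leqP a b; last first.
  have Ea : a = b.+1 by lia.
  by move: ar rb; rewrite Ea; lia.
have [rb'|br] := ltnP r (cN (take b w)).
  by have [m [? ? ?]] := IH (ltac:(lia)) (ltac:(lia)); exists m; split=> //; lia.
move: rb; rewrite cN_take_S; last lia.
by case Hb: (nth N w b) => /= rb; [exists b; split=> //; lia | lia].
Qed.

Local Open Scope ring_scope.

(** * Failures of pairs of integer sequences *)

Lemma exists_last_argmin (f : nat -> int) lo hi : (lo < hi)%N ->
  exists m, [/\ (lo < m <= hi)%N, (forall w, (lo < w <= hi)%N -> f m <= f w) &
                (forall w, (m < w <= hi)%N -> f m < f w)].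
Proof.
move=> lohi; have [d ->] : exists d, hi = (lo + d.+1)%N by exists (hi - lo.+1)%N; lia.
elim: d => [|d [m [Hm min_m last_m]]].
  exists (lo + 1)%N; split=> [|w Hw|w Hw]; [lia | | lia].
  by have -> : w = (lo + 1)%N by lia.
have [Hc|Hc] := lerP (f (lo + d.+2)%N) (f m).
  exists (lo + d.+2)%N; split=> [||w Hw]; [lia | | lia].
  move=> w Hw; have [->//|Hne] := eqVneq w (lo + d.+2)%N.
  by apply: le_trans Hc _; apply: min_m; lia.
exists m; split=> [|w Hw|w Hw]; first lia.
- have [->|Hne] := eqVneq w (lo + d.+2)%N; first exact: ltW.
  by apply: min_m; lia.
- have [->//|Hne] := eqVneq w (lo + d.+2)%N.
  by apply: last_m; lia.
Qed.

Section Failures.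

Variables a b : nat -> int.

Definition fail_at (s r : nat) : Prop :=
  (s < r)%N /\ forall t, (s < t <= r)%N -> a s < a t /\ a r + b r < a t + b s.

Definition fail_at_dual (s r : nat) : Prop :=
  (s < r)%N /\ forall t, (s <= t < r)%N -> b r < b t /\ a s + b s < a r + b t.

Definition has_failure (n : nat) : Prop := exists s r, (r <= n)%N /\ fail_at s r.

(* If [b] drops below a level [c] it kept on [s, t) while [a] stays above
   [a s], some window ending at [t] fails: otherwise each window [u, t]
   offers [v] with [a v < a t], and restarting from the last minimum of [a]
   on [u, t] strictly shortens the window. *)
Lemma fail_at_of_drop (c : int) s t :
  (s < t)%N -> b t < c -> (forall u, (s <= u < t)%N -> c <= b u) ->
  (forall v, (s < v <= t)%N -> a s < a v) ->
  exists2 u, (s <= u < t)%N & fail_at u t.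
Proof.
move=> st btc b_ge a_gt; apply: NNPP => no_fail.
suff : forall d u, (t - u <= d)%N -> (s <= u < t)%N ->
   (forall v, (u < v <= t)%N -> a u < a v) -> False.
  by move/(_ t s); apply=> //; lia.
elim=> [|d IH] u Hd ut a_gt_u; first lia.
have [v uvt av] : exists2 v, (u < v <= t)%N & a v + b u <= a t + b t.
  apply: NNPP => Hne; apply: no_fail; exists u => //; split; first lia.
  move=> w uwt; split; first exact: a_gt_u.
  by apply: NNPP => Hw; apply: Hne; exists w; rewrite // leNgt; apply/negP.
have cu := b_ge u ut.
have [m [um min_m last_m]] := exists_last_argmin a (ltac:(lia) : (u < t)%N).
have mt : m != t by apply: contraTneq (min_m v uvt) => ->; lia.
by apply: (IH m); [lia | lia | move=> w mwt; apply: last_m; lia].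
Qed.

Lemma fail_at_dual_of_minimal s r : fail_at s r ->
  (forall s' r', (s <= s')%N -> (r' <= r)%N -> (r' - s' < r - s)%N -> ~ fail_at s' r') ->
  fail_at_dual s r.
Proof.
move=> [sr Hf] minimal; have Hr := Hf r (ltac:(lia)).
have b_ge : forall t, (s < t < r)%N -> b s <= b t.
  elim/ltn_ind=> t IH str; rewrite leNgt; apply/negP => btc.
  have [u sut] : exists2 u, (s <= u < t)%N & fail_at u t.
    apply: (@fail_at_of_drop (b s)) => //; first lia.
    - move=> u sut; have [->//|ne] := eqVneq u s; apply: IH; lia.
    - by move=> v svt; apply: (Hf v _).1; lia.
  by apply: minimal; lia.
split=> // t srt; have [->|ne] := eqVneq t s; first lia.
by have := b_ge t (ltac:(lia)); have := Hf t (ltac:(lia)); lia.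
Qed.

Lemma fail_at_dual_within s r : fail_at s r ->
  exists s' r', [/\ (s <= s')%N, (r' <= r)%N, fail_at s' r' & fail_at_dual s' r'].
Proof.
move: {2}(r - s)%N (leqnn (r - s)%N) => d; elim: d s r => [|d IH] s r Hd Hf.
  by case: Hf => sr _; lia.
have [[s2 [r2 [ss2 r2r shorter f2]]] | no_inner] := classic
  (exists s2 r2, [/\ (s <= s2)%N, (r2 <= r)%N, (r2 - s2 < r - s)%N & fail_at s2 r2]).
  have [s' [r' [? ? ? ?]]] := IH s2 r2 (ltac:(lia)) f2.
  by exists s', r'; split=> //; lia.
exists s, r; split=> //; apply: fail_at_dual_of_minimal => // s2 r2 ? ? ? ?.
by apply: no_inner; exists s2, r2.
Qed.

End Failures.

Definition mirror (n : nat) (f : nat -> int) (t : nat) : int := f (n - t)%N.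

Lemma fail_at_dual_mirror (a b : nat -> int) n s r : (r <= n)%N ->
  fail_at_dual a b s r -> fail_at (mirror n b) (mirror n a) (n - r) (n - s).
Proof.
rewrite /mirror => rn [sr H]; split=> [|t Ht]; first lia.
rewrite !subKn; [|lia|lia]; have := H (n - t)%N (ltac:(lia)); lia.
Qed.

Lemma eq_has_failure (a b a' b' : nat -> int) n :
  (forall t, (t <= n)%N -> a t = a' t /\ b t = b' t) ->
  has_failure a b n <-> has_failure a' b' n.
Proof.
suff imp a1 b1 a2 b2 : (forall t, (t <= n)%N -> a1 t = a2 t /\ b1 t = b2 t) ->
    has_failure a1 b1 n -> has_failure a2 b2 n.
  by move=> eq_ab; split; apply: imp => // t tn; have [-> ->] := eq_ab t tn.
move=> eq_ab [s [r [rn [sr H]]]]; exists s, r; split=> //; split=> // t st.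
have [<- <-] := eq_ab s (ltac:(lia)); have [<- <-] := eq_ab r rn.
by have [<- _] := eq_ab t (ltac:(lia)); exact: H.
Qed.

Lemma mirror_has_failure (a b : nat -> int) n :
  has_failure a b n -> has_failure (mirror n b) (mirror n a) n.
Proof.
move=> [s [r [rn /fail_at_dual_within [s' [r' [? ? _ dual]]]]]].
by exists (n - r')%N, (n - s')%N; split; [lia | apply: fail_at_dual_mirror => //; lia].
Qed.

Lemma has_failure_mirror (a b : nat -> int) n :
  has_failure (mirror n b) (mirror n a) n <-> has_failure a b n.
Proof.
split; last exact: mirror_has_failure.
move/mirror_has_failure; apply: (iffLR (eq_has_failure _)) => t tn.
by rewrite /mirror subKn.
Qed.

Definition window (y0 y1 t : nat) : int := if (y0 <= t < y1)%N then 1 else 0.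

Section Shift.

Variables (a b : nat -> int) (y0 y1 : nat).
Hypothesis y01 : (y0 < y1)%N.
Hypothesis a_gt : forall t, (y0 < t < y1)%N -> a y0 < a t.
Hypothesis a_y1 : a y1 <= a y0.

Let a_ge t : (y0 <= t < y1)%N -> a y0 <= a t.
Proof. by move=> Ht; have [->//|ne] := eqVneq t y0; apply/ltW/a_gt; lia. Qed.

Lemma fail_at_shift s r : fail_at a b s r ->
  fail_at (a \+ window y0 y1) (b \- window y0 y1) s r.
Proof.
move=> [sr H]; split=> // t srt /=; have [H1 H2] := H t srt.
have [cross|] := boolP (s < y1 <= r)%N; last by rewrite /window; repeat case: ifP; lia.
have := (H y1 cross).1; have := @a_ge s; rewrite /window; repeat case: ifP; lia.
Qed.

Lemma fail_at_unshift_away s r : (y0 <= s)%N || (r < y0)%N ->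
  fail_at (a \+ window y0 y1) (b \- window y0 y1) s r -> fail_at a b s r.
Proof.
move=> away [sr H]; split=> // t srt; have := H t srt => /=.
by rewrite /window; repeat case: ifP; lia.
Qed.

Lemma fail_at_unshift_across s r : (s < y0 <= r)%N -> b s = 0 -> 0 < b y0 ->
  fail_at (a \+ window y0 y1) (b \- window y0 y1) s r ->
  exists s', fail_at a b s' r.
Proof.
move=> sy0r bs by0 [sr H]; have [y1r|ry1] := leqP y1 r.
  exists s; split=> // t srt; have := H t srt; have := H y1 (ltac:(lia)) => /=.
  by have := @a_ge t; rewrite /window; repeat case: ifP; lia.
have [ry0|y0r] := eqVneq r y0.
  by have := H r (ltac:(lia)); rewrite /= /window ry0; repeat case: ifP; lia.
exists y0; split=> [|t srt]; first lia.
by have := H t (ltac:(lia)); have := @a_gt t; rewrite /= /window; repeat case: ifP; lia.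
Qed.

Variable n : nat.
Hypothesis no_fail : ~ has_failure a b n.
Hypothesis b_y0 : 0 < b y0.
Hypothesis y1n : (y1 <= n)%N.

Lemma window_ge1 t : (y0 <= t < y1)%N -> 1 <= b t.
Proof.
elim/ltn_ind: t => t IH Ht; have [->//|ne] := eqVneq t y0.
rewrite leNgt; apply/negP => bt; apply: no_fail.
have [u _ fail_ut] : exists2 u, (y0 <= u < t)%N & fail_at a b u t.
  apply: (@fail_at_of_drop _ _ 1) => //; first lia.
  - by move=> u Hu; apply: IH; lia.
  - by move=> v Hv; apply: a_gt; lia.
by exists u, t; split=> //; lia.
Qed.

Lemma no_failure_shift : (forall t, (t < y0)%N -> b t = 0) ->
  ~ has_failure (a \+ window y0 y1) (b \- window y0 y1) n.
Proof.
move=> b0 [s [r [rn Hf]]]; apply: no_fail.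
have [away|across] := boolP ((y0 <= s)%N || (r < y0)%N).
  by exists s, r; split=> //; apply: fail_at_unshift_away.
have sy0r : (s < y0 <= r)%N by lia.
have [s' Hf'] := fail_at_unshift_across sy0r (b0 s (ltac:(lia))) b_y0 Hf.
by exists s', r.
Qed.

End Shift.

(** * Pushes *)

Lemma ellE nu g k : ell nu g k = (xN nu (cN (take k g)))%:Z - (cE (take k g))%:Z.
Proof. by []. Qed.

Lemma ell_E_step nu (g : walk) m : (m < size g)%N -> nth N g m = E ->
  ell nu g m.+1 = ell nu g m - 1.
Proof. by move=> Hm He; rewrite !ellE cE_take_S ?cN_take_S // He /= addn0 addn1; lia. Qed.

Lemma ell_N_step nu (g : walk) m : (m < size g)%N -> nth N g m = N ->
  ell nu g m <= ell nu g m.+1.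
Proof.
move=> Hm Hn; rewrite !ellE cE_take_S ?cN_take_S // Hn /= addn0 addn1.
by have := xN_mono nu (leqnSn (cN (take m g))); lia.
Qed.

(* [k'] is the position of the point [p'] attached by the push to the point
   [p] reached after [k] steps. *)
Definition next_same_ell (nu g : walk) (k k' : nat) : Prop :=
  ell nu g k' = ell nu g k /\ forall m, (k < m < k')%N -> ell nu g m <> ell nu g k.

Lemma next_same_ell_gt nu (g : walk) k k' : (k' <= size g)%N -> nth N g k = N ->
  next_same_ell nu g k k' -> forall m, (k < m < k')%N -> ell nu g k < ell nu g m.
Proof.
move=> k'g Hk [_ Hne]; elim=> [|m IH] // /andP[km mk'].
have mg : (m < size g)%N by lia.
have [Emk|kltm] := eqVneq m k.
  by subst m; have := ell_N_step nu mg Hk; have := Hne k.+1; lia.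
have := IH (ltac:(lia)); have := Hne m.+1 (ltac:(lia)).
by case Hm: (nth N g m); [have := ell_N_step nu mg Hm | have := ell_E_step nu mg Hm]; lia.
Qed.

Definition push_pos (nu g : walk) (k k' : nat) : Prop :=
  [/\ (0 < k < k')%N, (k' <= size g)%N, nth N g k.-1 = E, nth N g k = N &
      next_same_ell nu g k k'].

Definition push_at (g : walk) (k k' : nat) : walk :=
  take k.-1 g ++ drop k (take k' g) ++ E :: drop k' g.

Lemma push_stepP nu g g' :
  push_step nu g g' <-> exists k k', push_pos nu g k k' /\ g' = push_at g k k'.
Proof.
split=> [[k [k' [[k0 kk' k'g] [[He Hn] [Hell [Hne ->]]]]]] | [k [k' [[/andP[k0 kk'] k'g He Hn [Hell Hne]] ->]]]].
  by exists k, k'; split=> //; split=> //; [lia | split=> // m /andP[]; exact: Hne].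
exists k, k'; split=> //; split=> //; split=> //; split=> // m km mk'.
by apply: Hne; rewrite km.
Qed.

Lemma counts_move_E (P S Q : walk) :
  cE (P ++ S ++ E :: Q) = cE (P ++ E :: S ++ Q) /\ cN (P ++ S ++ E :: Q) = cN (P ++ E :: S ++ Q).
Proof. by rewrite !cE_cat !cN_cat !countsE !cE_cat !cN_cat; split; lia. Qed.

Lemma xN_move_E (P S Q : walk) r :
  (xN (P ++ S ++ E :: Q) r = xN (P ++ E :: S ++ Q) r - (cN P <= r < cN P + cN S))%N /\
  ((cN P <= r < cN P + cN S) -> 0 < xN (P ++ E :: S ++ Q) r)%N.
Proof.
rewrite /xN /nabscissae (counts_move_E P S Q).1 !nabscissae_cat /= !nabscissae_cat /=.
rewrite !nth_cat !size_nabscissae; have [rP|Pr] := ltnP r (cN P); first by split=> //; lia.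
have [rS|Sr] := ltnP (r - cN P) (cN S); last first.
  have -> : (r < cN P + cN S)%N = false by lia.
  by rewrite andbF subn0.
by rewrite !nabscissae_shift !(nth_map 0) ?size_nabscissae //; split=> /=; lia.
Qed.

Lemma push_at_split (g : walk) k k' : (0 < k < k')%N -> (k' <= size g)%N -> nth N g k.-1 = E ->
  exists P S Q, [/\ g = P ++ E :: S ++ Q, push_at g k k' = P ++ S ++ E :: Q,
                    cN P = cN (take k g) & (cN P + cN S = cN (take k' g))%N].
Proof.
move=> /andP[k0 kk'] k'g He.
have take_k : take k g = rcons (take k.-1 g) E.
  by rewrite -He -take_nth ?prednK //; lia.
have take_k' : take k' g = take k g ++ drop k (take k' g).
  by rewrite -{1}(cat_take_drop k (take k' g)) take_takel // ltnW.
exists (take k.-1 g), (drop k (take k' g)), (drop k' g); split=> //.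
- by rewrite -cat_rcons -take_k catA -take_k' cat_take_drop.
- by rewrite take_k -cats1 cN_cat !countsE addn0.
- by rewrite [in RHS]take_k' take_k -cats1 !cN_cat !countsE addn0.
Qed.

Section PushAt.

Variables (g : walk) (k k' : nat).
Hypotheses (kk' : (0 < k < k')%N) (k'g : (k' <= size g)%N) (He : nth N g k.-1 = E).

Lemma push_at_counts : cE (push_at g k k') = cE g /\ cN (push_at g k k') = cN g.
Proof. by have [P [S [Q [-> -> _ _]]]] := push_at_split kk' k'g He; exact: counts_move_E. Qed.

Lemma push_at_xN r :
  (xN (push_at g k k') r = xN g r - (cN (take k g) <= r < cN (take k' g)))%N /\
  ((cN (take k g) <= r < cN (take k' g)) -> 0 < xN g r)%N.
Proof.
have [P [S [Q [Hg -> <- <-]]]] := push_at_split kk' k'g He.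
by rewrite [in xN g]Hg; exact: xN_move_E.
Qed.

End PushAt.

(* Row [r] is stored at index [r.+1]; index [0] is a base point where every
   gap vanishes. *)
Definition gap (u v : walk) (t : nat) : int :=
  if t is r.+1 then (xN u r)%:Z - (xN v r)%:Z else 0.

Lemma gap_id u t : gap u u t = 0.
Proof. by case: t => //= r; rewrite subrr. Qed.

Lemma gap_ell nu (g : walk) m : (m < size g)%N -> nth N g m = N ->
  gap nu g (cN (take m g)).+1 = ell nu g m.
Proof. by move=> Hm Hn; rewrite /= xN_at. Qed.

Lemma gap_push_at nu (g g1 g' : walk) y0 y1 :
  (forall r, xN g1 r = xN g r - (y0 <= r < y1))%N ->
  (forall r, y0 <= r < y1 -> 0 < xN g r)%N ->
  forall t, gap nu g1 t = (gap nu g \+ window y0.+1 y1.+1) t /\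
            gap g1 g' t = (gap g g' \- window y0.+1 y1.+1) t.
Proof.
move=> Hx Hpos [|t] //=; rewrite Hx /window.
have -> : (y0 < t.+1 < y1.+1)%N = (y0 <= t < y1)%N by [].
by case: ifP => Ht; [have := Hpos t Ht | rewrite subn0]; lia.
Qed.

Section PushPos.

Variables (nu g : walk) (k k' : nat).
Hypothesis push : push_pos nu g k k'.

Lemma push_pos_rows : (cN (take k g) < cN (take k' g))%N.
Proof.
have [/andP[_ kk'] k'g _ Hk _] := push.
have := cN_take_mono g kk'; rewrite /= cN_take_S ?Hk //=; lia.
Qed.

Lemma push_pos_gap_gt t : ((cN (take k g)).+1 < t < (cN (take k' g)).+1)%N ->
  gap nu g (cN (take k g)).+1 < gap nu g t.
Proof.
have [/andP[k0 kk'] k'g _ Hk next] := push; case: t => [|t] // Ht.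
have [m [/andP[km mk'] Hm Em]] :
    exists m, [/\ (k <= m < k')%N, nth N g m = N & cN (take m g) = t].
  by apply: exists_nth_N_between; lia.
have mk : m != k by apply: contraTneq Ht => Emk; rewrite -Em Emk ltnn.
rewrite -Em !gap_ell //; try lia.
by apply: (next_same_ell_gt k'g Hk next); lia.
Qed.

Lemma push_pos_gap_le : gap nu g (cN (take k' g)).+1 <= gap nu g (cN (take k g)).+1.
Proof.
have [/andP[_ kk'] k'g _ Hk [Hell _]] := push.
rewrite (@gap_ell nu g k) //; last lia.
by rewrite -Hell ellE /=; have := xN_take_ge g k'; lia.
Qed.

End PushPos.

Lemma exists_next_same_ell nu (g : walk) u : (u < size g)%N -> nth N g u = N ->
  ell nu g (size g) <= ell nu g u ->
  exists k', (u < k' <= size g)%N /\ next_same_ell nu g u k'.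
Proof.
move=> ug Hu Hend; set l := ell nu g u.
have exP : exists m, [&& (u < m)%N, (m <= size g)%N & ell nu g m <= l] by exists (size g); rewrite ug leqnn Hend.
case: (ex_minnP exP) => k' /and3P[uk' k'g Hk'] k'_min.
have above_l m : (u < m < k')%N -> l < ell nu g m.
  move=> /andP[um mk']; rewrite ltNge; apply/negP => Hm.
  by have := k'_min m; rewrite um Hm /= andbT => /(_ (ltac:(lia))); lia.
exists k'; split; [lia | split; last by move=> m Hm; have := above_l m Hm; lia].
apply/eqP; rewrite eq_le Hk' /=; have [->|k'u] := eqVneq k' u.+1; first exact: ell_N_step.
have k'1g : (k'.-1 < size g)%N by lia.
have := above_l k'.-1 (ltac:(lia)); case Hk: (nth N g k'.-1).
- by have := ell_N_step nu k'1g Hk; rewrite prednK //; lia.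
- by have := ell_E_step nu k'1g Hk; rewrite prednK //; lia.
Qed.

Lemma nth_pred_E (g : walk) u : (u < size g)%N -> nth N g u = N ->
  ((if cN (take u g) is y.+1 then xN g y else 0) < xN g (cN (take u g)))%N ->
  (0 < u)%N /\ nth N g u.-1 = E.
Proof.
move=> ug Hu; rewrite xN_at //; case: u ug Hu => [|u] ug Hu; first by rewrite take0.
move=> Hlt; split=> //=; case Hn: (nth N g u) => //; move: Hlt.
have ug' : (u < size g)%N by lia.
by rewrite cN_take_S // cE_take_S // Hn addn1 addn0 /= xN_at // ltnn.
Qed.

Lemma exists_push_pos nu (g : walk) y0 : above g nu -> (y0 < cN g)%N ->
  ((if y0 is y.+1 then xN g y else 0) < xN g y0)%N ->
  exists k k', push_pos nu g k k' /\ cN (take k g) = y0.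
Proof.
move=> /aboveP[HcE HcN HX] Hy0 Hv.
have [u [ug Hu Uy0]] := exists_nth_N Hy0.
have [u0 Hpred] : (0 < u)%N /\ nth N g u.-1 = E by apply: nth_pred_E; rewrite ?Uy0.
have Hend : ell nu g (size g) <= ell nu g u.
  rewrite -(gap_ell nu ug Hu) Uy0 ellE take_size HcN xN_default // HcE /=; have := HX y0; lia.
have [k' [/andP[uk' k'g] next]] := exists_next_same_ell ug Hu Hend.
by exists u, k'; split=> //; split=> //; rewrite u0.
Qed.

(** * Tamari intervals as failure-free pairs *)

Definition no_failure (nu g g' : walk) : Prop :=
  ~ has_failure (gap nu g) (gap g g') (cN nu).+1.

Definition weight (nu g : walk) : nat := (\sum_(r < cN nu) xN g r)%N.

Lemma gap_push_pos nu g g' k k' : push_pos nu g k k' -> forall t,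
  gap nu (push_at g k k') t = (gap nu g \+ window (cN (take k g)).+1 (cN (take k' g)).+1) t /\
  gap (push_at g k k') g' t = (gap g g' \- window (cN (take k g)).+1 (cN (take k' g)).+1) t.
Proof.
move=> [kk' k'g He _ _]; apply: gap_push_at => r.
  by have [] := push_at_xN kk' k'g He r.
by have [] := push_at_xN kk' k'g He r.
Qed.

Lemma has_failure_push_at nu g g' k k' : push_pos nu g k k' ->
  has_failure (gap nu g) (gap g g') (cN nu).+1 ->
  has_failure (gap nu (push_at g k k')) (gap (push_at g k k') g') (cN nu).+1.
Proof.
move=> push [s [r [rn Hf]]].
apply/(eq_has_failure (fun t _ => gap_push_pos g' push t)).
exists s, r; split=> //; apply: fail_at_shift Hf; first by rewrite ltnS; exact: push_pos_rows push.
- exact: push_pos_gap_gt push.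
- exact: (push_pos_gap_le push).
Qed.

Lemma tam_le_no_failure nu g g' : tam_le nu g g' -> no_failure nu g g'.
Proof.
move=> H; elim: (clos_rt_rt1n _ _ _ _ H) => {g g' H}
  [g|g g1 g' [_ _ /push_stepP[k [k' [push ->]]]] _ IH]; last first.
  by move/(has_failure_push_at push).
move=> [s [r [_ [sr /(_ r)]]]]; rewrite sr leqnn => /(_ isT)[_].
by rewrite !gap_id ltxx.
Qed.

Lemma above_push_at nu g k k' : push_pos nu g k k' -> above (push_at g k k') g.
Proof.
move=> [kk' k'g He _ _]; have [Ec Nc] := push_at_counts kk' k'g He.
by apply/aboveP; split=> // r; have [-> _] := push_at_xN kk' k'g He r; exact: leq_subr.
Qed.

Lemma weight_push_at nu g k k' : push_pos nu g k k' -> (cN (take k g) < cN nu)%N ->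
  (weight nu (push_at g k k') < weight nu g)%N.
Proof.
move=> push y0nu; have [kk' k'g He _ _] := push; have rows := push_pos_rows push.
rewrite /weight (bigD1 (Ordinal y0nu)) //= [X in (_ < X)%N](bigD1 (Ordinal y0nu)) //=.
have le_rest : (\sum_(i < cN nu | i != Ordinal y0nu) xN (push_at g k k') i <=
                \sum_(i < cN nu | i != Ordinal y0nu) xN g i)%N.
  by apply: leq_sum => i _; have [-> _] := push_at_xN kk' k'g He i; exact: leq_subr.
have [-> pos] := push_at_xN kk' k'g He (cN (take k g)).
rewrite leqnn rows; apply: leq_ltn_trans (leq_add (leqnn _) le_rest) _.
by rewrite ltn_add2r; have := pos (ltac:(lia)); lia.
Qed.

Lemma first_gap_row g g' : above g' g -> g' <> g ->
  exists y0, [/\ (y0 < cN g)%N, (xN g' y0 < xN g y0)%N & forall r, (r < y0)%N -> xN g r = xN g' r].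
Proof.
move=> /aboveP[Ec Nc le_x] neq.
have exP : exists r, (r < cN g)%N && (xN g' r < xN g r)%N.
  apply: NNPP => none; apply: neq; apply: eq_walk_xN => // r; rewrite Nc => Hr.
  apply/eqP; rewrite eqn_leq le_x leqNgt; apply/negP => lt; apply: none.
  by exists r; rewrite Hr lt.
case: (ex_minnP exP) => y0 /andP[y0g lt_y0] y0_min; exists y0; split=> // r ry0.
apply/eqP; rewrite eq_sym eqn_leq le_x leqNgt; apply/negP => lt.
by have := y0_min r; rewrite lt andbT => /(_ (ltac:(lia))); lia.
Qed.

Lemma no_failure_push_toward nu g g' : above g nu -> above g' g -> no_failure nu g g' -> g' <> g ->
  exists k k', [/\ push_pos nu g k k', above g' (push_at g k k'),
                   no_failure nu (push_at g k k') g' & (weight nu (push_at g k k') < weight nu g)%N].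
Proof.
move=> gnu g'g nf neq; have [_ Ng _] := (aboveP g nu).1 gnu.
have [Eg' Ng' le_g'] := (aboveP g' g).1 g'g.
have [y0 [y0g lt_y0 eq_before]] := first_gap_row g'g neq.
have [k [k' [push Ek]]] : exists k k', push_pos nu g k k' /\ cN (take k g) = y0.
  apply: exists_push_pos => //.
  case: y0 y0g lt_y0 eq_before => [|y] _ lt_y0 eq_b; first lia.
  by rewrite eq_b //; have := xN_mono g' (leqnSn y); lia.
have [kk' k'g He _ _] := push.
have rows : ((cN (take k g)).+1 < (cN (take k' g)).+1)%N by rewrite ltnS; exact: push_pos_rows push.
have y1n : ((cN (take k' g)).+1 <= (cN nu).+1)%N by rewrite ltnS -Ng cN_take_le.
have a_gt := push_pos_gap_gt push.
have b_y0 : 0 < gap g g' (cN (take k g)).+1 by rewrite Ek /=; lia.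
have a_le := push_pos_gap_le push.
have ge1 := window_ge1 rows a_gt a_le nf b_y0 y1n.
exists k, k'; split=> //.
- apply/aboveP; have [-> ->] := push_at_counts kk' k'g He; split=> // r.
  have [-> _] := push_at_xN kk' k'g He r.
  have [Hr|_] := boolP (cN (take k g) <= r < cN (take k' g))%N; last by rewrite subn0 le_g'.
  by have := ge1 r.+1 (ltac:(lia)); rewrite /gap; lia.
- have nf' := no_failure_shift rows a_gt a_le nf b_y0 y1n.
  move=> /(eq_has_failure (fun t _ => gap_push_pos g' push t)).
  apply: nf' => -[|t] // Ht; rewrite /gap eq_before //; lia.
- by apply: (weight_push_at push); rewrite Ek -Ng.
Qed.

Lemma no_failure_tam_le nu g g' : above g nu -> above g' g -> no_failure nu g g' -> tam_le nu g g'.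
Proof.
move Hw: (weight nu g) => w; elim/ltn_ind: w g Hw => w IH g Hw gnu g'g nf.
have [->|/eqP neq] := eqVneq g' g; first exact: rt_refl.
have [k [k' [push g'push nf' lt_w]]] := no_failure_push_toward gnu g'g nf neq.
have push_nu := above_trans (above_push_at push) gnu.
apply: rt_trans (rt_step _ _ _ _ _) (IH _ _ _ erefl push_nu g'push nf'); last by rewrite -Hw.
by split=> //; apply/push_stepP; exists k, k'.
Qed.

(** * Mirror symmetry *)

Lemma gap_rev (a b : walk) t : cE a = cE b -> cN a = cN b -> (t <= (cN a).+1)%N ->
  gap (rev a) (rev b) t = mirror (cN a).+1 (gap b a) t.
Proof.
move=> Eab Nab; rewrite /mirror; case: t => [|t] Ht.
  by rewrite subn0 /= !xN_default -?Nab // Eab subrr.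
have [tj|ja] := ltnP t (cN a); last first.
  have -> : t = cN a by lia.
  by rewrite subSS subnn /= !xN_default ?cN_rev -?Nab ?cE_rev ?Eab ?subrr.
rewrite subSS /= !xN_rev -?Nab //; have -> : (cN a - t = (cN a - t.+1).+1)%N by lia.
by rewrite /= Eab; have := xN_le a (cN a - t.+1); have := xN_le b (cN a - t.+1); lia.
Qed.

Lemma no_failure_rev (glow gmid gup : walk) :
  cE glow = cE gmid -> cE gmid = cE gup -> cN glow = cN gmid -> cN gmid = cN gup ->
  no_failure (rev gup) (rev gmid) (rev glow) <-> no_failure glow gmid gup.
Proof.
move=> E1 E2 N1 N2; rewrite /no_failure cN_rev -N2 -N1.
have eq_gaps t : (t <= (cN glow).+1)%N ->
    gap (rev gup) (rev gmid) t = mirror (cN glow).+1 (gap gmid gup) t /\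
    gap (rev gmid) (rev glow) t = mirror (cN glow).+1 (gap glow gmid) t.
  by move=> Ht; rewrite !gap_rev -?E2 -?N2 -?N1.
have iff_fail : has_failure (gap (rev gup) (rev gmid)) (gap (rev gmid) (rev glow)) (cN glow).+1 <->
                has_failure (gap glow gmid) (gap gmid gup) (cN glow).+1.
  exact: iff_trans (eq_has_failure eq_gaps) (has_failure_mirror _ _ _).
by split=> nf /iff_fail.
Qed.

Lemma inG_no_failure i j (nu g g' : walk) : endpoint nu = (i, j) -> above g' g -> above g nu ->
  inG i j nu g g' <-> no_failure nu g g'.
Proof.
move=> Hnu g'g gnu; split; first by case=> _ _ _; exact: tam_le_no_failure.
move=> nf; split=> //; first exact: above_trans g'g gnu.
exact: no_failure_tam_le.
Qed.

Theorem corollary1 (i j : nat) (glow gmid gup : walk) :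
  inR i j glow gmid gup ->
  (inG i j (mir gup) (mir gmid) (mir glow) <-> inG i j glow gmid gup).
Proof.
move=> [Elow Emid Eup up_mid mid_low]; move: Elow Emid Eup; rewrite !endpointE.
move=> [E1 N1] [E2 N2] [E3 N3].
rewrite /mir !inG_no_failure ?endpointE ?cE_rev ?cN_rev ?E1 ?N1 ?E3 ?N3 //; try exact: above_rev.
by apply: no_failure_rev; congruence.
Qed.
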